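(* Let $T$ be a first-order theory over $\Sigma$ and $\varphi$ a sentence over $\Sigma$ such that $T\models\varphi$. Then $\mathrm{Opt}_\varphi$ is a monotone propagator for $T$.
   Context: Vocabularies are finite sets of predicate symbols. Truth values $\mathbf{t},\mathbf{f},\mathbf{u},\mathbf{i}$ with precision order $\mathbf{u} \le_p \mathbf{t} \le_p \mathbf{i}$, $\mathbf{u} \le_p \mathbf{f} \le_p \mathbf{i}$ ($\mathbf{t},\mathbf{f}$ incomparable). A four-valued $\Sigma$-structure $\tilde I$ has domain $D$ and assigns to each $P/n\in\Sigma$ a function $P^{\tilde I}:D^n\to\{\mathbf{t},\mathbf{f},\mathbf{u},\mathbf{i}\}$; two-valued structures are identified with ordinary structures. On structures with a fixed domain, $\le_p$ is pointwise; $\mathrm{glb}_{\le_p}$ is the greatest lower bound (glb of the empty set: all $\mathbf{i}$). For a sentence $\varphi$, $\mathrm{Opt}_\varphi(\tilde I)=\mathrm{glb}_{\le_p}\{M\mid M\text{ two-valued},\tilde I\le_p M, M\models\varphi\}$. A propagator for $T$ is a map $O$ on four-valued $\Sigma$-structures with (i) $\tilde I\le_p O(\tilde I)$ and (ii) $O(\tilde I)\le_p M$ for every two-valued model $M$ of $T$ with $\tilde I\le_p M$; it is monotone if $\tilde I\le_p\tilde J$ implies $O(\tilde I)\le_p O(\tilde J)$. *)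

From mathcomp Require Import all_boot.
From Stdlib Require Import ClassicalEpsilon.
Set Implicit Arguments. Unset Strict Implicit. Unset Printing Implicit Defensive.

Inductive tv4 := Tt | Tf | Tu | Ti.

Definition le_p (a b : tv4) : Prop :=
  a = b \/ a = Tu \/ b = Ti.

Section FO.
Variable sym : finType.
Variable ar : sym -> nat.

Inductive form : Type :=
| FPred (P : sym) (args : 'I_(ar P) -> nat)
| FEq (x y : nat)
| FTop | FBot
| FNot (f : form)
| FAnd (f g : form)
| FOr (f g : form)
| FImp (f g : form)
| FAll (x : nat) (f : form)
| FEx (x : nat) (f : form).

Fixpoint free_in (z : nat) (f : form) : bool :=
  match f with
  | FPred P a => [exists i, a i == z]
  | FEq x y => (x == z) || (y == z)
  | FTop | FBot => false
  | FNot g => free_in z g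
  | FAnd g h | FOr g h | FImp g h => free_in z g || free_in z h
  | FAll x g | FEx x g => (x != z) && free_in z g
  end.

Definition sentence (f : form) : Prop := forall z, ~~ free_in z f.

Definition struct2 (D : Type) := forall P : sym, ('I_(ar P) -> D) -> bool.

Definition fstruct (D : Type) := forall P : sym, ('I_(ar P) -> D) -> tv4.

Definition upd (D : Type) (v : nat -> D) (x : nat) (d : D) : nat -> D :=
  fun y => if y == x then d else v y.

Fixpoint sat (D : Type) (M : struct2 D) (v : nat -> D) (f : form) : Prop :=
  match f with
  | FPred P a => M P (fun i => v (a i))
  | FEq x y => v x = v y
  | FTop => True
  | FBot => False
  | FNot g => ~ sat M v g
  | FAnd g h => sat M v g /\ sat M v h
  | FOr g h => sat M v g \/ sat M v h
  | FImp g h => sat M v g -> sat M v h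
  | FAll x g => forall d : D, sat M (upd v x d) g
  | FEx x g => exists d : D, sat M (upd v x d) g
  end.

Definition models (D : Type) (M : struct2 D) (f : form) : Prop :=
  forall v : nat -> D, sat M v f.

Definition model_of (D : Type) (M : struct2 D) (T : form -> Prop) : Prop :=
  forall g, T g -> models M g.

Definition entails (T : form -> Prop) (f : form) : Prop :=
  forall (D : Type), inhabited D -> forall M : struct2 D, model_of M T -> models M f.

Definition emb (D : Type) (M : struct2 D) : fstruct D :=
  fun P a => if M P a then Tt else Tf.

Definition leS (D : Type) (I J : fstruct D) : Prop :=
  forall P a, le_p (I P a) (J P a).

Definition is_glb (D : Type) (S : fstruct D -> Prop) (G : fstruct D) : Prop :=
  (forall J, S J -> leS G J) /\
  (forall H, (forall J, S J -> leS H J) -> leS H G).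

(* glb_{<=p} S (for S empty this is the all-i structure). *)
Definition glbS (D : Type) (S : fstruct D -> Prop) : fstruct D :=
  epsilon (inhabits (fun _ _ => Ti)) (is_glb S).

Definition Opt (f : form) (D : Type) (I : fstruct D) : fstruct D :=
  glbS (fun J => exists M : struct2 D, [/\ leS I (emb M), models M f & J = emb M]).

Definition propagator (T : form -> Prop)
    (O : forall D : Type, fstruct D -> fstruct D) : Prop :=
  forall (D : Type), inhabited D -> forall I : fstruct D,
    leS I (O D I) /\
    (forall M : struct2 D, model_of M T -> leS I (emb M) -> leS (O D I) (emb M)).

Definition monotone_prop (O : forall D : Type, fstruct D -> fstruct D) : Prop :=
  forall (D : Type) (I J : fstruct D), leS I J -> leS (O D I) (O D J).

End FO.

(** [Opt_phi I] is the glb of the two-valued models of [phi] above [I], so it lies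
    above [I] and below each such model; by [T |= phi] every model of [T] above [I]
    is one of them. Monotonicity holds because a larger [I] has fewer such models,
    and the glb of a smaller set is larger. The precision order on truth values has
    all glbs, so [glbS] really computes a glb. *)
From Stdlib Require Import ClassicalEpsilon.
From mathcomp Require Import all_boot.

Lemma le_p_trans a b c : le_p a b -> le_p b c -> le_p a c.
Proof. by rewrite /le_p; case: a; case: b; case: c; intuition discriminate. Qed.

Definition tv4_glb (A : tv4 -> Prop) : tv4 :=
  if excluded_middle_informative (A Tu \/ (A Tt /\ A Tf)) then Tu
  else if excluded_middle_informative (A Tt) then Tt
  else if excluded_middle_informative (A Tf) then Tf
  else Ti.

Lemma tv4_glb_lb (A : tv4 -> Prop) x : A x -> le_p (tv4_glb A) x.
Proof.
rewrite /tv4_glb /le_p.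
case: (excluded_middle_informative (A Tu \/ _)) => [|nUTF]; first tauto.
case: (excluded_middle_informative (A Tt)) => [AT|nT];
  [|case: (excluded_middle_informative (A Tf)) => [AF|nF]];
  by case: x; tauto.
Qed.

Lemma tv4_glb_greatest (A : tv4 -> Prop) y :
  (forall x, A x -> le_p y x) -> le_p y (tv4_glb A).
Proof.
rewrite /tv4_glb /le_p => lbA.
case: (excluded_middle_informative (A Tu \/ _)) => [[AU | [AT AF]] | nUTF].
- by case: (lbA _ AU) => [|[|]]; tauto.
- by move: (lbA _ AT) (lbA _ AF); clear; case: y; intuition discriminate.
case: (excluded_middle_informative (A Tt)) => [AT | nT].
  by case: (lbA _ AT) => [|[|//]]; tauto.
case: (excluded_middle_informative (A Tf)) => [AF | nF]; last by tauto.
by case: (lbA _ AF) => [|[|//]]; tauto.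
Qed.

Section Glb.
Variables (sym : finType) (ar : sym -> nat) (D : Type).
Implicit Types (I J : fstruct ar D) (S : fstruct ar D -> Prop).

Lemma leS_trans I J (K : fstruct ar D) : leS I J -> leS J K -> leS I K.
Proof. by move=> IJ JK P a; apply: le_p_trans (IJ P a) (JK P a). Qed.

Lemma is_glb_glbS S : is_glb S (glbS S).
Proof.
apply: epsilon_spec.
exists (fun P a => tv4_glb (fun x => exists2 J, S J & J P a = x)); split.
- by move=> J SJ P a; apply: tv4_glb_lb; exists J.
- move=> H lbH P a; apply: tv4_glb_greatest => _ [J SJ <-].
  exact: lbH.
Qed.

Lemma glbS_lb S J : S J -> leS (glbS S) J.
Proof. exact: (is_glb_glbS S).1. Qed.

Lemma glbS_greatest S H : (forall J, S J -> leS H J) -> leS H (glbS S).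
Proof. exact: (is_glb_glbS S).2. Qed.

Lemma glbS_antitone S S' : (forall J, S' J -> S J) -> leS (glbS S) (glbS S').
Proof. by move=> subS; apply: glbS_greatest => J /subS; apply: glbS_lb. Qed.

End Glb.

Section Opt.
Variables (sym : finType) (ar : sym -> nat) (phi : form ar) (D : Type).
Implicit Types (I J : fstruct ar D) (M : struct2 ar D).

Lemma leS_Opt I : leS I (Opt phi I).
Proof. by apply: glbS_greatest => _ [M [IM _ ->]]. Qed.

Lemma Opt_le_model I M : models M phi -> leS I (emb M) -> leS (Opt phi I) (emb M).
Proof. by move=> Mphi IM; apply: glbS_lb; exists M. Qed.

Lemma Opt_monotone I J : leS I J -> leS (Opt phi I) (Opt phi J).
Proof.
move=> IJ; apply: glbS_antitone => _ [M [JM Mphi ->]].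
by exists M; split=> //; apply: leS_trans JM.
Qed.

End Opt.

Theorem proposition3p9 (sym : finType) (ar : sym -> nat)
    (T : form ar -> Prop) (phi : form ar)
    (hT : forall g, T g -> sentence g) (hphi : sentence phi)
    (hent : entails T phi) :
  propagator T (Opt phi) /\ monotone_prop (Opt phi).
Proof.
split=> [D inhD I | D I J]; last exact: Opt_monotone.
split; first exact: leS_Opt.
by move=> M MT; apply: Opt_le_model; apply: hent.
Qed.
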